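(* Let $f$ be continuous on $[0,1]$, and let $w(x):=\int_0^x f(s)\,ds$ and $\overline{w}:=\int_0^1 w(x)\,dx$. Let $n\ge 2$, $h=1/n$, $x_j=jh$ ($j=0,\dots,n$). Let $\mathcal{M}_h$ be the space of continuous functions on $[0,1]$ that are linear on each $[x_{j-1},x_j]$ and vanish at $0$ and $1$, and let $V_h$ be the space of continuous functions on $[0,1]$ that are quadratic on each $[x_{j-1},x_j]$ and vanish at $0$ and $1$. Let $(w_h,u_h)\in V_h\times\mathcal{M}_h$ be the solution of the reduced discrete problem $$\begin{aligned} (w_h',v_h')+(u_h',v_h)&=(f,v_h)&&\text{for all } v_h\in V_h,\\ (w_h,q_h')&=0&&\text{for all } q_h\in\mathcal{M}_h. \end{aligned}$$ Let $\tilde{\mathcal{M}}_h:=\{v_h: v_h \text{ continuous on } [0,1], \text{ linear on each } [x_{j-1},x_j],\ v_h(0)=v_h(1)\}$. Then $u_h-\overline{u}_h$, where $\overline{u}_h=\int_0^1 u_h(x)\,dx$, is the $L^2(0,1)$-orthogonal projection of $w-\overline{w}$ onto $\tilde{\mathcal{M}}_h$.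
   Context: $(\cdot,\cdot)$ denotes the $L^2(0,1)$ inner product. *)

From Stdlib Require Import Reals Lra Lia.
From Coquelicot Require Import Coquelicot.
Open Scope R_scope.

Definition node (n j : nat) : R := INR j / INR n.

Definition L2ip (u v : R -> R) : R := RInt (fun x => u x * v x) 0 1.

Definition cont_on_01 (f : R -> R) : Prop :=
  forall x, 0 <= x <= 1 ->
    filterlim f (within (fun y => 0 <= y <= 1) (locally x)) (locally (f x)).

(* linear on each closed mesh cell [x_{j-1}, x_j], j = 1..n
   (continuity on [0,1] follows since neighbouring cells share nodes). *)
Definition pw_linear (n : nat) (v : R -> R) : Prop :=
  forall j : nat, (1 <= j <= n)%nat ->
    exists a b : R, forall x, node n (j - 1) <= x <= node n j -> v x = a + b * x.

Definition pw_quadratic (n : nat) (v : R -> R) : Prop :=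
  forall j : nat, (1 <= j <= n)%nat ->
    exists a b c : R, forall x, node n (j - 1) <= x <= node n j ->
      v x = a + b * x + c * x ^ 2.

Definition Mh (n : nat) (v : R -> R) : Prop :=
  pw_linear n v /\ v 0 = 0 /\ v 1 = 0.

Definition Vh (n : nat) (v : R -> R) : Prop :=
  pw_quadratic n v /\ v 0 = 0 /\ v 1 = 0.

Definition Mh_tilde (n : nat) (v : R -> R) : Prop :=
  pw_linear n v /\ v 0 = v 1.

Definition is_L2_projection (S : (R -> R) -> Prop) (g p : R -> R) : Prop :=
  S p /\ forall q, S q -> L2ip (fun x => g x - p x) q = 0.

(* Fix q in the periodic space tilde-M_h and let r := q - mean q.  Since r has mean zero, its
   primitive v(x) := int_0^x r is a legitimate test function in V_h, and cellwise
   integration by parts turns the three terms of the first discrete equation into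
     (w_h', v') = (w_h', r) = -(w_h, r') = 0   (second equation, tested with q - q(0)),
     (u_h', v) = -(u_h, r),   (f, v) = -(w, r).
   Hence (u_h - w, r) = 0.  Subtracting the means of u_h and w also makes the
   difference orthogonal to the constants, hence to q = r + mean q. *)

From Stdlib Require Import Reals Lra Lia.
From Coquelicot Require Import Coquelicot.
Open Scope R_scope.

Lemma Derive_minus_const (f : R -> R) (c t : R) :
  Derive (fun y => f y - c) t = Derive f t.
Proof. unfold Derive; apply f_equal, Lim_ext; intros h; unfold Rdiv; ring. Qed.

Lemma Derive_interval_ext (f g : R -> R) (c d t l : R) :
  (forall y, c < y < d -> f y = g y) -> c < t < d -> is_derive g t l -> Derive f t = l.
Proof.
  intros E Ht Dg. apply is_derive_unique, is_derive_ext_loc with g; auto.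
  apply locally_interval with c d; try (simpl; tauto).
  intros y Hy1 Hy2; symmetry; apply E; simpl in *; lra.
Qed.

Lemma continuous_of_is_derive (g : R -> R) (t l : R) : is_derive g t l -> continuous g t.
Proof.
  intros D. apply (ex_derive_continuous (K := R_AbsRing) (V := R_NormedModule)).
  exists l; exact D.
Qed.

Lemma is_derive_RInt_continuous (g : R -> R) (c t : R) :
  (forall y, continuous g y) -> is_derive (fun s => RInt g c s) t (g t).
Proof.
  intros Hg. apply is_derive_RInt with c; [|apply Hg].
  exists (mkposreal 1 Rlt_0_1). intros s _.
  apply (RInt_correct (V := R_CompleteNormedModule)), ex_RInt_continuous; auto.
Qed.

Definition clamp (c d t : R) : R := Rmax c (Rmin d t).

Lemma clamp_in (c d t : R) : c <= d -> c <= clamp c d t <= d.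
Proof. unfold clamp, Rmax, Rmin; repeat destruct Rle_dec; lra. Qed.

Lemma clamp_id (c d t : R) : c <= t <= d -> clamp c d t = t.
Proof. unfold clamp, Rmax, Rmin; repeat destruct Rle_dec; lra. Qed.

Lemma clamp_1_lipschitz (c d s t : R) : Rabs (clamp c d s - clamp c d t) <= Rabs (s - t).
Proof. unfold clamp, Rmax, Rmin, Rabs; repeat destruct Rle_dec; repeat destruct Rcase_abs; lra. Qed.

Lemma continuous_clamp_comp (g : R -> R) (c d : R) : c <= d ->
  (forall t, c <= t <= d ->
     filterlim g (within (fun y => c <= y <= d) (locally t)) (locally (g t))) ->
  forall t, continuous (fun y => g (clamp c d y)) t.
Proof.
  intros Hcd Hg t.
  apply filterlim_comp with (G := within (fun y => c <= y <= d) (locally (clamp c d t))).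
  - intros P [eps HP]. exists eps. intros y Hy. apply HP; [|apply clamp_in; exact Hcd].
    eapply Rle_lt_trans; [apply clamp_1_lipschitz | exact Hy].
  - apply Hg, clamp_in, Hcd.
Qed.

Lemma RInt_Rminus (f g : R -> R) (c d : R) : ex_RInt f c d -> ex_RInt g c d ->
  RInt (fun t => f t - g t) c d = RInt f c d - RInt g c d.
Proof. apply (RInt_minus (V := R_CompleteNormedModule)). Qed.

Lemma RInt_Rscal (f : R -> R) (k c d : R) : ex_RInt f c d ->
  RInt (fun t => k * f t) c d = k * RInt f c d.
Proof. apply (RInt_scal (V := R_CompleteNormedModule)). Qed.

Lemma RInt_mult_centered (k q : R -> R) :
  ex_RInt k 0 1 -> ex_RInt (fun t => k t * q t) 0 1 ->
  RInt (fun t => k t * (q t - RInt q 0 1)) 0 1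
  = RInt (fun t => k t * q t) 0 1 - RInt q 0 1 * RInt k 0 1.
Proof.
  intros Ek Ekq.
  rewrite <- RInt_Rscal, <- RInt_Rminus by auto using ex_RInt_scal.
  apply RInt_ext. intros t _. simpl. ring.
Qed.

Lemma RInt_centered_orthogonal (g p q : R -> R) :
  ex_RInt g 0 1 -> ex_RInt p 0 1 -> ex_RInt q 0 1 ->
  ex_RInt (fun t => g t * q t) 0 1 -> ex_RInt (fun t => p t * q t) 0 1 ->
  RInt (fun t => g t * (q t - RInt q 0 1)) 0 1 = RInt (fun t => p t * (q t - RInt q 0 1)) 0 1 ->
  RInt (fun t => (g t - RInt g 0 1 - (p t - RInt p 0 1)) * q t) 0 1 = 0.
Proof.
  intros Eg Ep Eq Egq Epq H.
  rewrite !RInt_mult_centered in H by assumption.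
  rewrite (RInt_ext _ (fun t => (g t * q t - p t * q t) - (RInt g 0 1 - RInt p 0 1) * q t))
    by (intros; simpl; ring).
  rewrite RInt_Rminus, RInt_Rminus, RInt_Rscal; auto using ex_RInt_minus, ex_RInt_scal.
  lra.
Qed.

Definition is_partition (x : nat -> R) (m : nat) (a b : R) : Prop :=
  x O = a /\ x m = b /\ forall j, x j <= x (S j).

Definition piecewise_continuous (x : nat -> R) (m : nat) (h : R -> R) : Prop :=
  forall j, (j < m)%nat -> exists H : R -> R,
    (forall t, x j < t < x (S j) -> h t = H t) /\
    (forall t, x j <= t <= x (S j) -> continuous H t).

Definition piecewise_C1 (x : nat -> R) (m : nat) (F dF : R -> R) : Prop :=
  forall j, (j < m)%nat -> exists G dG : R -> R,
    (forall t, x j <= t <= x (S j) -> F t = G t /\ is_derive G t (dG t) /\ continuous dG t) /\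
    (forall t, x j < t < x (S j) -> dF t = dG t).

Definition cellwise_affine (x : nat -> R) (m : nat) (v : R -> R) : Prop :=
  forall j, (j < m)%nat -> exists c0 c1 : R,
    forall t, x j <= t <= x (S j) -> v t = c0 + c1 * t.

Definition cellwise_quadratic (x : nat -> R) (m : nat) (v : R -> R) : Prop :=
  forall j, (j < m)%nat -> exists c0 c1 c2 : R,
    forall t, x j <= t <= x (S j) -> v t = c0 + c1 * t + c2 * t ^ 2.

Section Partition.

Context {x : nat -> R} {m : nat} {a b : R}.

Lemma is_RInt_telescope (h : R -> R) (P : nat -> R) :
  (forall j, (j < m)%nat -> is_RInt h (x j) (x (S j)) (P (S j) - P j)) ->
  forall k, (k <= m)%nat -> is_RInt h (x O) (x k) (P k - P O).
Proof.
  intros Hcell k. induction k as [|k IH]; intros Hk.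
  - replace (P O - P O) with 0 by ring. exact (is_RInt_point (V := R_NormedModule) h (x O)).
  - replace (P (S k) - P O) with (plus (P k - P O) (P (S k) - P k))
      by (unfold plus; simpl; ring).
    apply (is_RInt_Chasles (V := R_NormedModule)) with (x k); [apply IH | apply Hcell]; lia.
Qed.

Lemma piecewise_continuous_mult (h1 h2 : R -> R) :
  piecewise_continuous x m h1 -> piecewise_continuous x m h2 ->
  piecewise_continuous x m (fun t => h1 t * h2 t).
Proof.
  intros P1 P2 j Hj.
  destruct (P1 j Hj) as [H1 [E1 C1]], (P2 j Hj) as [H2 [E2 C2]].
  exists (fun t => H1 t * H2 t); split.
  - intros t Ht; rewrite E1, E2; auto.
  - intros t Ht; apply (continuous_mult (K := R_AbsRing)); auto.
Qed.

Lemma piecewise_C1_continuous (F dF : R -> R) :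
  piecewise_C1 x m F dF -> piecewise_continuous x m F /\ piecewise_continuous x m dF.
Proof.
  intros HF; split; intros j Hj; destruct (HF j Hj) as [G [dG [EG EdG]]].
  - exists G; split; [intros t Ht; apply EG; lra|].
    intros t Ht. apply continuous_of_is_derive with (dG t), EG, Ht.
  - exists dG; split; [exact EdG|]. intros t Ht; apply EG, Ht.
Qed.

Lemma Derive_piecewise_C1 (F dF : R -> R) (j : nat) (t : R) :
  piecewise_C1 x m F dF -> (j < m)%nat -> x j < t < x (S j) -> Derive F t = dF t.
Proof.
  intros HF Hj Ht. destruct (HF j Hj) as [G [dG [EG EdG]]].
  rewrite EdG by exact Ht.
  apply Derive_interval_ext with G (x j) (x (S j)); [intros y Hy; apply EG; lra | exact Ht |].
  apply EG; lra.
Qed.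

Lemma cellwise_affine_sub_const (v : R -> R) (c : R) :
  cellwise_affine x m v -> cellwise_affine x m (fun t => v t - c).
Proof.
  intros Hv j Hj. destruct (Hv j Hj) as [c0 [c1 E]].
  exists (c0 - c), c1. intros t Ht. rewrite E by exact Ht. ring.
Qed.

Lemma cellwise_affine_quadratic (v : R -> R) :
  cellwise_affine x m v -> cellwise_quadratic x m v.
Proof.
  intros Hv j Hj. destruct (Hv j Hj) as [c0 [c1 E]].
  exists c0, c1, 0. intros t Ht. rewrite E by exact Ht. ring.
Qed.

Lemma cellwise_quadratic_C1 (v : R -> R) :
  cellwise_quadratic x m v -> piecewise_C1 x m v (Derive v).
Proof.
  intros Hv j Hj. destruct (Hv j Hj) as [c0 [c1 [c2 E]]].
  assert (D : forall t, is_derive (fun s => c0 + c1 * s + c2 * s ^ 2) t (c1 + 2 * c2 * t))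
    by (intros t; auto_derive; auto; ring).
  exists (fun s => c0 + c1 * s + c2 * s ^ 2), (fun s => c1 + 2 * c2 * s). split.
  - intros t Ht. split; [apply E, Ht | split; [apply D |]].
    apply continuous_of_is_derive with (2 * c2). auto_derive; auto; ring.
  - intros t Ht.
    apply Derive_interval_ext with (fun s => c0 + c1 * s + c2 * s ^ 2) (x j) (x (S j)); auto.
    intros y Hy. apply E. lra.
Qed.

Lemma cellwise_affine_piecewise_continuous (v : R -> R) :
  cellwise_affine x m v -> piecewise_continuous x m v.
Proof.
  intros Hv. apply (piecewise_C1_continuous v (Derive v)).
  apply cellwise_quadratic_C1, cellwise_affine_quadratic, Hv.
Qed.

Hypothesis Hx : is_partition x m a b.

Lemma partition_le (i k : nat) : (i <= k)%nat -> x i <= x k.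
Proof.
  destruct Hx as [_ [_ Hle]]. induction 1 as [|k _ IH]; [lra|].
  specialize (Hle k); lra.
Qed.

Lemma partition_endpoints_le : a <= b.
Proof.
  destruct Hx as [x0 [xm _]]. rewrite <- x0, <- xm. apply partition_le; lia.
Qed.

Lemma partition_cell_in (j : nat) (t : R) :
  (j < m)%nat -> x j <= t <= x (S j) -> a <= t <= b.
Proof.
  destruct Hx as [x0 [xm _]]; intros Hj Ht. rewrite <- x0, <- xm.
  assert (x O <= x j) by (apply partition_le; lia).
  assert (x (S j) <= x m) by (apply partition_le; lia).
  lra.
Qed.

Lemma cell_Rmin (j : nat) : Rmin (x j) (x (S j)) = x j.
Proof. apply Rmin_left, Hx. Qed.

Lemma cell_Rmax (j : nat) : Rmax (x j) (x (S j)) = x (S j).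
Proof. apply Rmax_right, Hx. Qed.

Lemma ex_RInt_cell (h : R -> R) (j : nat) :
  piecewise_continuous x m h -> (j < m)%nat -> ex_RInt h (x j) (x (S j)).
Proof.
  intros Hh Hj. destruct (Hh j Hj) as [H [EH CH]].
  apply ex_RInt_ext with H.
  - rewrite cell_Rmin, cell_Rmax; intros t Ht; symmetry; auto.
  - apply (ex_RInt_continuous (V := R_CompleteNormedModule)).
    rewrite cell_Rmin, cell_Rmax; auto.
Qed.

Lemma ex_RInt_prefix (h : R -> R) :
  piecewise_continuous x m h -> forall k, (k <= m)%nat -> ex_RInt h a (x k).
Proof.
  intros Hh k. destruct Hx as [x0 _]. rewrite <- x0. induction k as [|k IH]; intros Hk.
  - apply ex_RInt_point.
  - apply ex_RInt_Chasles with (x k); [apply IH | apply ex_RInt_cell]; auto; lia.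
Qed.

Lemma ex_RInt_piecewise_continuous (h : R -> R) :
  piecewise_continuous x m h -> ex_RInt h a b.
Proof. intros Hh. destruct Hx as [_ [xm _]]. rewrite <- xm. apply ex_RInt_prefix; auto. Qed.

Lemma RInt_piecewise_ext (h1 h2 : R -> R) :
  (forall j, (j < m)%nat -> forall t, x j < t < x (S j) -> h1 t = h2 t) ->
  piecewise_continuous x m h2 -> RInt h1 a b = RInt h2 a b.
Proof.
  intros E Hh2. destruct Hx as [x0 [xm _]]. rewrite <- x0, <- xm.
  pose (P := (fun k => RInt h2 (x O) (x k)) : nat -> R).
  replace (RInt h2 (x O) (x m)) with (P m - P O)
    by (unfold P; rewrite RInt_point; apply Rminus_0_r).
  apply is_RInt_unique, is_RInt_telescope; [|lia]. intros j Hj.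
  replace (P (S j) - P j) with (RInt h2 (x j) (x (S j))).
  - apply is_RInt_ext with h2.
    + rewrite cell_Rmin, cell_Rmax; intros t Ht; symmetry; eauto.
    + apply (RInt_correct (V := R_CompleteNormedModule)), ex_RInt_cell; auto.
  - unfold P. rewrite <- (RInt_Chasles h2 (x O) (x j) (x (S j))).
    + unfold plus; simpl; lra.
    + rewrite x0; apply ex_RInt_prefix; auto; lia.
    + apply ex_RInt_cell; auto.
Qed.

Lemma integration_by_parts (F dF G dG : R -> R) :
  piecewise_C1 x m F dF -> piecewise_C1 x m G dG ->
  RInt (fun t => dF t * G t) a b + RInt (fun t => F t * dG t) a b = F b * G b - F a * G a.
Proof.
  intros HF HG.
  destruct (piecewise_C1_continuous _ _ HF) as [cF cdF].
  destruct (piecewise_C1_continuous _ _ HG) as [cG cdG].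
  rewrite <- (RInt_plus (V := R_CompleteNormedModule));
    try (apply ex_RInt_piecewise_continuous, piecewise_continuous_mult; auto).
  apply is_RInt_unique. destruct Hx as [x0 [xm _]]. rewrite <- x0, <- xm.
  apply (is_RInt_telescope _ (fun k => F (x k) * G (x k))); [|lia].
  intros j Hj.
  destruct (HF j Hj) as [F1 [dF1 [EF EdF]]], (HG j Hj) as [G1 [dG1 [EG EdG]]].
  assert (Hcell : x j <= x (S j)) by apply Hx.
  assert (Hl : x j <= x j <= x (S j)) by lra.
  assert (Hr : x j <= x (S j) <= x (S j)) by lra.
  rewrite (proj1 (EF _ Hl)), (proj1 (EF _ Hr)), (proj1 (EG _ Hl)), (proj1 (EG _ Hr)).
  apply is_RInt_ext with (fun t => dF1 t * G1 t + F1 t * dG1 t).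
  { rewrite cell_Rmin, cell_Rmax; intros t Ht.
    assert (Ht' : x j <= t <= x (S j)) by lra.
    rewrite EdF, EdG, (proj1 (EF t Ht')), (proj1 (EG t Ht')) by exact Ht; reflexivity. }
  apply (is_RInt_derive (fun t => F1 t * G1 t)); rewrite cell_Rmin, cell_Rmax;
    intros t Ht; destruct (EF t Ht) as [_ [DF CdF]], (EG t Ht) as [_ [DG CdG]].
  - apply (is_derive_mult F1 G1); auto. intros; apply Rmult_comm.
  - apply (continuous_plus (V := R_NormedModule));
      apply (continuous_mult (K := R_AbsRing)); eauto using continuous_of_is_derive.
Qed.

Lemma piecewise_continuous_of_continuous_on (f : R -> R) :
  (forall t, a <= t <= b ->
     filterlim f (within (fun y => a <= y <= b) (locally t)) (locally (f t))) ->
  piecewise_continuous x m f.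
Proof.
  intros Hf j Hj. exists (fun y => f (clamp a b y)); split.
  - intros t Ht. rewrite clamp_id; [reflexivity|]. apply (partition_cell_in j); auto; lra.
  - intros t _. apply continuous_clamp_comp; auto using partition_endpoints_le.
Qed.

Lemma primitive_piecewise_C1 (h : R -> R) :
  piecewise_continuous x m h -> piecewise_C1 x m (fun t => RInt h a t) h.
Proof.
  intros Hh j Hj. destruct (Hh j Hj) as [H [EH CH]].
  assert (Hcell : x j <= x (S j)) by apply Hx.
  (* Clamping to the cell extends [H] continuously to all of R, so the primitive
     has two-sided derivatives at the nodes as well. *)
  pose (He y := H (clamp (x j) (x (S j)) y)).
  assert (CHe : forall y, continuous He y).
  { apply continuous_clamp_comp; [exact Hcell|]. intros t Ht.
    exact (filterlim_filter_le_1 _ (filter_le_within _) (CH t Ht)). }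
  assert (EHe : forall t, x j < t < x (S j) -> h t = He t).
  { intros t Ht. unfold He. rewrite clamp_id by lra. auto. }
  exists (fun t => RInt h a (x j) + RInt He (x j) t), He. split; [|exact EHe].
  intros t Ht. split; [|split; [|apply CHe]].
  - assert (Eht : RInt h (x j) t = RInt He (x j) t).
    { apply RInt_ext. rewrite Rmin_left, Rmax_right by lra. intros s Hs; apply EHe; lra. }
    rewrite <- (RInt_Chasles h a (x j) t), Eht; [reflexivity| |].
    + apply ex_RInt_prefix; auto; lia.
    + apply ex_RInt_ext with He;
        [|apply (ex_RInt_continuous (V := R_CompleteNormedModule)); auto].
      rewrite Rmin_left, Rmax_right by lra. intros s Hs; symmetry; apply EHe; lra.
  - pose proof (is_derive_plus _ _ t _ _ (is_derive_const (RInt h a (x j)) t)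
                  (is_derive_RInt_continuous He (x j) t CHe)) as D.
    unfold plus, zero in D; simpl in D. rewrite Rplus_0_l in D. exact D.
Qed.

Lemma primitive_cellwise_quadratic (r : R -> R) :
  cellwise_affine x m r -> cellwise_quadratic x m (fun t => RInt r a t).
Proof.
  intros Hr j Hj. destruct (Hr j Hj) as [c0 [c1 E]].
  pose (A s := c0 * s + c1 / 2 * s ^ 2).
  exists (RInt r a (x j) - A (x j)), c0, (c1 / 2). intros t Ht.
  assert (I : is_RInt r (x j) t (A t - A (x j))).
  { apply is_RInt_ext with (fun s => c0 + c1 * s).
    - rewrite Rmin_left, Rmax_right by lra. intros s Hs; symmetry; apply E; lra.
    - apply (is_RInt_derive (V := R_CompleteNormedModule) A);
        rewrite Rmin_left, Rmax_right by lra; intros s Hs.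
      + unfold A; auto_derive; auto; field.
      + apply continuous_of_is_derive with c1. auto_derive; auto; ring. }
  rewrite <- (RInt_Chasles r a (x j) t).
  - rewrite (is_RInt_unique _ _ _ _ I). unfold plus, A; simpl; ring.
  - apply ex_RInt_prefix; [apply cellwise_affine_piecewise_continuous; auto | lia].
  - exists (A t - A (x j)); exact I.
Qed.

End Partition.

Lemma node_0 (n : nat) : node n 0 = 0.
Proof. unfold node; simpl; unfold Rdiv; ring. Qed.

Lemma node_n (n : nat) : (0 < n)%nat -> node n n = 1.
Proof. intros Hn. unfold node. field. apply not_0_INR. lia. Qed.

Lemma uniform_mesh_partition (n : nat) : (0 < n)%nat -> is_partition (node n) n 0 1.
Proof.
  intros Hn. split; [apply node_0 | split; [apply node_n, Hn |]].
  intros j. unfold node, Rdiv. apply Rmult_le_compat_r.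
  - left; apply Rinv_0_lt_compat, lt_0_INR, Hn.
  - apply le_INR; lia.
Qed.

Lemma pw_linear_cellwise_affine (n : nat) (v : R -> R) :
  pw_linear n v <-> cellwise_affine (node n) n v.
Proof.
  split; intros H j Hj.
  - destruct (H (S j)) as [c0 [c1 E]]; [lia|].
    rewrite Nat.sub_succ, Nat.sub_0_r in E. eauto.
  - destruct (H (j - 1)%nat) as [c0 [c1 E]]; [lia|].
    replace (S (j - 1)) with j in E by lia. eauto.
Qed.

Lemma pw_quadratic_cellwise_quadratic (n : nat) (v : R -> R) :
  pw_quadratic n v <-> cellwise_quadratic (node n) n v.
Proof.
  split; intros H j Hj.
  - destruct (H (S j)) as [c0 [c1 [c2 E]]]; [lia|].
    rewrite Nat.sub_succ, Nat.sub_0_r in E. eauto.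
  - destruct (H (j - 1)%nat) as [c0 [c1 [c2 E]]]; [lia|].
    replace (S (j - 1)) with j in E by lia. eauto.
Qed.

Lemma mean_free_primitive_in_Vh (n : nat) (q : R -> R) :
  (0 < n)%nat -> pw_linear n q ->
  Vh n (fun t => RInt (fun s => q s - RInt q 0 1) 0 t).
Proof.
  intros Hn Hq. pose proof (uniform_mesh_partition n Hn) as Hx.
  apply pw_linear_cellwise_affine in Hq.
  assert (Eq : ex_RInt q 0 1)
    by apply (ex_RInt_piecewise_continuous Hx), cellwise_affine_piecewise_continuous, Hq.
  split; [|split].
  - apply pw_quadratic_cellwise_quadratic, (primitive_cellwise_quadratic Hx).
    apply cellwise_affine_sub_const, Hq.
  - apply (RInt_point (V := R_CompleteNormedModule)).
  - rewrite RInt_Rminus, RInt_const by auto using ex_RInt_const.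
    unfold scal; simpl; unfold mult; simpl; ring.
Qed.

Lemma L2ip_uh_eq_w_on_mean_free (f wh uh q : R -> R) (n : nat) :
  cont_on_01 f -> (0 < n)%nat -> Vh n wh -> pw_linear n uh ->
  (forall vh, Vh n vh ->
     L2ip (Derive wh) (Derive vh) + L2ip (Derive uh) vh = L2ip f vh) ->
  (forall qh, Mh n qh -> L2ip wh (Derive qh) = 0) ->
  Mh_tilde n q ->
  let r := fun t => q t - RInt q 0 1 in
  L2ip uh r = L2ip (fun t => RInt f 0 t) r.
Proof.
  intros Hf Hn [Hwh [wh0 wh1]] Huh Hmom Hdiv [Hq q01] r.
  pose proof (uniform_mesh_partition n Hn) as Hx.
  pose (v := (fun t => RInt r 0 t) : R -> R).
  assert (Vv : Vh n v) by exact (mean_free_primitive_in_Vh n q Hn Hq).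
  pose proof Vv as [_ [v0 v1]].
  assert (Hq0 : Mh n (fun t => q t - q 0)).
  { split; [|rewrite q01; split; ring].
    apply pw_linear_cellwise_affine, cellwise_affine_sub_const, pw_linear_cellwise_affine, Hq. }
  apply pw_quadratic_cellwise_quadratic, cellwise_quadratic_C1 in Hwh.
  apply pw_linear_cellwise_affine in Huh, Hq.
  assert (Hr : cellwise_affine (node n) n r) by apply cellwise_affine_sub_const, Hq.
  assert (Cv : piecewise_C1 (node n) n v r)
    by apply (primitive_piecewise_C1 Hx), cellwise_affine_piecewise_continuous, Hr.
  assert (Cuh := cellwise_quadratic_C1 uh (cellwise_affine_quadratic uh Huh)).
  assert (Cr := cellwise_quadratic_C1 r (cellwise_affine_quadratic r Hr)).
  assert (Cw := primitive_piecewise_C1 Hx f (piecewise_continuous_of_continuous_on Hx f Hf)).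
  assert (Hwh_r : L2ip (Derive wh) r = 0).
  { assert (E : L2ip wh (Derive r) = L2ip wh (Derive (fun t => q t - q 0))).
    { apply RInt_ext. intros t _. unfold r. rewrite !Derive_minus_const. reflexivity. }
    rewrite (Hdiv _ Hq0) in E.
    pose proof (integration_by_parts Hx _ _ _ _ Hwh Cr) as I.
    rewrite wh0, wh1 in I. unfold L2ip in *. lra. }
  assert (Hwh_v : L2ip (Derive wh) (Derive v) = L2ip (Derive wh) r).
  { apply (RInt_piecewise_ext Hx).
    - intros j Hj t Ht. rewrite (Derive_piecewise_C1 v r j t Cv Hj Ht). reflexivity.
    - apply piecewise_continuous_mult;
        [apply (piecewise_C1_continuous _ _ Hwh) | apply (piecewise_C1_continuous _ _ Cr)]. }
  pose proof (integration_by_parts Hx _ _ _ _ Cuh Cv) as Iu.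
  pose proof (integration_by_parts Hx _ _ _ _ Cw Cv) as Iw.
  pose proof (Hmom v Vv) as Hm.
  rewrite v0, v1 in Iu, Iw. unfold L2ip in *; cbv beta in *. lra.
Qed.

Theorem theorem3p3 (f : R -> R) (n : nat) (wh uh : R -> R) :
  cont_on_01 f ->
  (2 <= n)%nat ->
  Vh n wh ->
  Mh n uh ->
  (forall vh, Vh n vh ->
     L2ip (Derive wh) (Derive vh) + L2ip (Derive uh) vh = L2ip f vh) ->
  (forall qh, Mh n qh -> L2ip wh (Derive qh) = 0) ->
  let w := fun x => RInt f 0 x in
  let wbar := RInt w 0 1 in
  let ubar := RInt uh 0 1 in
  is_L2_projection (Mh_tilde n) (fun x => w x - wbar) (fun x => uh x - ubar).
Proof.
  intros Hf Hn Hwh [Hu [uh0 uh1]] Hmom Hdiv w wbar ubar.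
  assert (Hn0 : (0 < n)%nat) by lia.
  pose proof (uniform_mesh_partition n Hn0) as Hx.
  assert (Pu : piecewise_continuous (node n) n uh)
    by apply cellwise_affine_piecewise_continuous, pw_linear_cellwise_affine, Hu.
  split.
  - split; [apply pw_linear_cellwise_affine, cellwise_affine_sub_const,
              pw_linear_cellwise_affine, Hu |].
    rewrite uh0, uh1. reflexivity.
  - intros q Hq.
    pose proof (L2ip_uh_eq_w_on_mean_free f wh uh q n Hf Hn0 Hwh Hu Hmom Hdiv Hq) as Key.
    assert (Pq : piecewise_continuous (node n) n q)
      by apply cellwise_affine_piecewise_continuous, pw_linear_cellwise_affine, (proj1 Hq).
    assert (Pw : piecewise_continuous (node n) n w)
      by apply (piecewise_C1_continuous _ f), (primitive_piecewise_C1 Hx),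
           (piecewise_continuous_of_continuous_on Hx), Hf.
    unfold L2ip in *.
    apply RInt_centered_orthogonal; [..|symmetry; exact Key];
      apply (ex_RInt_piecewise_continuous Hx); auto using piecewise_continuous_mult.
Qed.
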